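(* Under the standing assumptions, $\rho+\mathcal V=j_k\mathsf n^k$; equivalently $e_k(B)-e_k(\tilde D)=\mathsf n^{\mathsf T}\gamma\,W\,\mathsf n$. Moreover $U\mathsf n=\tilde U\tilde{\mathsf n}$ and $\mathsf n^{\mathsf T}\gamma W\mathsf n=\lambda^2\,\tilde{\mathsf n}^{\mathsf T}\varphi\tilde U\tilde{\mathsf n}$.
   Context: Let $s\ge1$. For a square matrix $X$, $e_k(X)$ are the elementary symmetric polynomials defined by $\det(I+tX)=\sum_k e_k(X)t^k$ ($e_k=0$ for $k<0$); $Y_k(X):=\sum_{i=0}^{k}(-1)^{k+i}e_i(X)X^{k-i}$ for $k\ge0$ and $Y_{-1}(X):=0$. Standing assumptions: $e,m$ are invertible real $s\times s$ matrices, $v\in\mathbb R^s$ with $v^{\mathsf T}v<1$, $\lambda:=(1-v^{\mathsf T}v)^{-1/2}$, $\hat\Lambda:=(I-vv^{\mathsf T})^{-1/2}$, and $e^{\mathsf T}\hat\Lambda m$ is symmetric. Define $\gamma=e^{\mathsf T}e$, $\varphi=m^{\mathsf T}m$, $\mathsf n=e^{-1}v$, $\tilde{\mathsf n}=m^{-1}v$, $\tilde D=e^{-1}\hat\Lambda^{-1}m$, $B=e^{-1}\hat\Lambda m$. Fix an integer $k$ and set $U=\lambda^{-1}Y_{k-1}(B)$, $\tilde U=\tilde D\,Y_{k-1}(\tilde D)$, $W=B\,Y_{k-1}(\tilde D)$, $\mathcal V=e_k(\tilde D)$, $\rho=-e_k(B)$, $j=-\gamma W\mathsf n$. *)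

From HB Require Import structures.
From mathcomp Require Import all_boot all_order all_algebra.
Set Implicit Arguments. Unset Strict Implicit. Unset Printing Implicit Defensive.
Import Order.TTheory GRing.Theory Num.Theory.
Local Open Scope ring_scope.

Section Defs.
Variables (R : comNzRingType) (s : nat).

Definition detIt (X : 'M[R]_s) : {poly R} :=
  \det (1%:M + map_mx (fun x => 'X * x%:P) X).

(* elementary symmetric polynomial e_k(X), defined by det(I+tX)=sum_k e_k(X) t^k *)
Definition esymmx (k : nat) (X : 'M[R]_s) : R := (detIt X)`_k.

Definition Ymx (k : nat) (X : 'M[R]_s) : 'M[R]_s :=
  \sum_(0 <= i < k.+1) ((-1) ^+ (k + i) * esymmx i X) *: X ^+ (k - i).

Definition Ypred (k : nat) (X : 'M[R]_s) : 'M[R]_s :=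
  if k is k'.+1 then Ymx k' X else 0.
End Defs.

Definition sc (R : Type) (A : 'M[R]_1) : R := A 0 0.

(* L is the (principal) inverse square root of A: L symmetric positive
   definite and L^2 A = I, i.e. L = A^{-1/2}. *)
Definition is_inv_sqrt (R : numFieldType) (s : nat) (L A : 'M[R]_s) : Prop :=
  L^T = L /\ (forall x : 'cV[R]_s, x != 0 -> 0 < sc (x^T *m L *m x))
  /\ L *m L *m A = 1%:M.

(* Since (I - v v^T) v = (1 - v^T v) v and Lhat is a positive definite square
   root of (I - v v^T)^-1, v is an eigenvector of Lhat with eigenvalue lambda,
   so Lhat^-1 = Lhat - lambda v v^T.  Hence B = D~ + n w is a rank-one
   perturbation of D~, with the row vector w = lambda v^T m = n^T gamma B.
   The adjugate of I + tX is sum_k Y_k(X) t^k, so the matrix determinant lemma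
   gives e_k(X + u w) = e_k(X) + w Y_(k-1)(X) u, and Y_k(X + u w) u = Y_k(X) u
   follows by induction; all four identities come from these with X = D~ and
   u = n. *)

From HB Require Import structures.
From mathcomp Require Import all_boot all_order all_algebra.
Set Implicit Arguments. Unset Strict Implicit. Unset Printing Implicit Defensive.
Import Order.TTheory GRing.Theory Num.Theory.
Local Open Scope ring_scope.

Lemma sc_trmx (R : Type) (A : 'M[R]_1) : sc A^T = sc A.
Proof. by rewrite /sc mxE. Qed.

Lemma scZ (R : comNzRingType) (a : R) (A : 'M[R]_1) : sc (a *: A) = a * sc A.
Proof. by rewrite /sc mxE. Qed.

Lemma scN (R : comNzRingType) (A : 'M[R]_1) : sc (- A) = - sc A.
Proof. by rewrite /sc mxE. Qed.

Lemma det_add_rank1 (R : idomainType) (s : nat) (M : 'M[R]_s) (a : 'cV[R]_s)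
    (b : 'rV[R]_s) :
  \det M != 0 -> \det (M + a *m b) = \det M + sc (b *m \adj M *m a).
Proof.
(* Two block eliminations of the bordered matrix N compute its determinant. *)
move=> detM_neq0; pose N := block_mx M a (- b) (1%:M : 'M_1).
have elimL : block_mx 1%:M (- a) 0 (1%:M : 'M_1) *m N =
             block_mx (M + a *m b) 0 (- b) 1%:M.
  rewrite /N mulmx_block !mul1mx !mul0mx !add0r !mulNmx mulmxN opprK mulmx1.
  by rewrite addrN addrC.
have elimR : block_mx 1%:M 0 (b *m \adj M) ((\det M)%:M : 'M_1) *m N =
             block_mx M a 0 (b *m \adj M *m a + (\det M)%:M).
  rewrite /N mulmx_block !mul1mx !mul0mx !addr0 mulmx1 -mulmxA mul_adj_mx.
  by rewrite mul_scalar_mx mul_mx_scalar scalerN addrN.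
have detN : \det N = \det (M + a *m b).
  have := congr1 determinant elimL.
  by rewrite det_mulmx det_ublock det_lblock !det1 !mul1r mulr1.
have := congr1 determinant elimR.
rewrite det_mulmx det_lblock det_ublock det1 mul1r det_scalar1 det_mx11 detN.
by move=> /(mulfI detM_neq0) ->; rewrite /sc !mxE eqxx mulr1n addrC.
Qed.

Section Pencil.
Variables (R : comNzRingType) (s : nat).
Implicit Types (X : 'M[R]_s) (A : 'M[{poly R}]_s).

Definition Itmx X : 'M[{poly R}]_s := 1%:M + map_mx (fun x => 'X * x%:P) X.

Definition coefmx k A : 'M[R]_s := map_mx (fun p : {poly R} => p`_k) A.

Lemma Ymx0 X : Ymx 0 X = (esymmx 0 X)%:M.
Proof. by rewrite /Ymx big_nat1 !expr0 mul1r scalemx1. Qed.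

Lemma YmxS k X : Ymx k.+1 X = (esymmx k.+1 X)%:M - X *m Ymx k X.
Proof.
rewrite /Ymx big_nat_recr //= subnn expr0 exprD -exprMn mulrNN mulr1 expr1n.
rewrite mul1r scalemx1 addrC mulmx_sumr -sumrN; congr (_ + _).
apply: eq_big_nat => i /andP[_ ltik].
by rewrite subSn // exprS addSn exprS mulN1r mulNr scaleNr scalemxAr mulmxE.
Qed.

Lemma Ymx_comm k X : X *m Ymx k X = Ymx k X *m X.
Proof.
elim: k => [|k IHk]; first by rewrite Ymx0 mul_mx_scalar mul_scalar_mx.
by rewrite YmxS mulmxBr mulmxBl mul_mx_scalar mul_scalar_mx -mulmxA IHk mulmxA.
Qed.

Lemma Ypred_comm k X : X *m Ypred k X = Ypred k X *m X.
Proof. by case: k => [|k] /=; [rewrite mulmx0 mul0mx | exact: Ymx_comm]. Qed.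

Lemma coefmx0_Itmx_mul X A : coefmx 0 (Itmx X *m A) = coefmx 0 A.
Proof.
rewrite /Itmx mulmxDl mul1mx; apply/matrixP => i j; rewrite !mxE coefD coef_sum.
by rewrite big1 ?addr0 // => l _; rewrite mxE -mulrA coefXM.
Qed.

Lemma coefmxS_Itmx_mul k X A :
  coefmx k.+1 (Itmx X *m A) = coefmx k.+1 A + X *m coefmx k A.
Proof.
rewrite /Itmx mulmxDl mul1mx; apply/matrixP => i j; rewrite !mxE coefD coef_sum.
by congr (_ + _); apply: eq_bigr => l _; rewrite !mxE -mulrA coefXM /= coefCM.
Qed.

Lemma coefmx_adj_Itmx k X : coefmx k (\adj (Itmx X)) = Ymx k X.
Proof.
have coef_det k' : coefmx k' (Itmx X *m \adj (Itmx X)) = (esymmx k' X)%:M.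
  by rewrite mul_mx_adj; apply/matrixP => i j; rewrite !mxE coefMn.
elim: k => [|k IHk]; first by rewrite Ymx0 -coef_det coefmx0_Itmx_mul.
by rewrite YmxS -coef_det coefmxS_Itmx_mul IHk addrK.
Qed.

Lemma det_Itmx_coef0 X : (\det (Itmx X))`_0 = 1.
Proof.
rewrite -horner_coef0 -[_.[0]]/(horner_eval 0 _) -det_map_mx -[RHS](det1 _ s).
congr (\det _); apply/matrixP => i j; rewrite /Itmx !mxE rmorphD rmorphMn rmorph1.
by rewrite rmorphM /= /horner_eval hornerX mul0r addr0.
Qed.

Lemma det_Itmx_neq0 X : \det (Itmx X) != 0.
Proof.
by apply: contra_neq (oner_neq0 R) => det0; rewrite -(det_Itmx_coef0 X) det0 coef0.
Qed.

Lemma coef_bilin k A (u : 'cV[R]_s) (w : 'rV[R]_s) :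
  ((map_mx polyC w *m A *m map_mx polyC u) 0 0)`_k = sc (w *m coefmx k A *m u).
Proof.
rewrite /sc !mxE coef_sum; apply: eq_bigr => j _; rewrite !mxE coefMC coef_sum.
by congr (_ * _); apply: eq_bigr => i _; rewrite !mxE coefCM.
Qed.

Lemma Itmx_add_rank1 X (u : 'cV[R]_s) (w : 'rV[R]_s) :
  Itmx (X + u *m w) = Itmx X + ('X *: map_mx polyC u) *m map_mx polyC w.
Proof.
apply/matrixP => i j; rewrite /Itmx !mxE !big_ord1 !mxE.
by rewrite polyCD polyCM mulrDr !addrA mulrA.
Qed.
End Pencil.

Section RankOneUpdate.
Variables (R : idomainType) (s : nat) (X : 'M[R]_s) (u : 'cV[R]_s) (w : 'rV[R]_s).

Lemma esymmx_add_rank1 k :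
  esymmx k (X + u *m w) = esymmx k X + sc (w *m Ypred k X *m u).
Proof.
rewrite /esymmx /detIt -/(Itmx X) -/(Itmx (X + u *m w)) Itmx_add_rank1.
rewrite det_add_rank1 ?det_Itmx_neq0 // coefD.
congr (_ + _); rewrite -scalemxAr /sc mxE coefXM.
case: k => [|k] /=; first by rewrite mulmx0 mul0mx /sc mxE.
by rewrite coef_bilin coefmx_adj_Itmx.
Qed.

Lemma Ymx_add_rank1 k : Ymx k (X + u *m w) *m u = Ymx k X *m u.
Proof.
elim: k => [|k IHk].
  by rewrite !Ymx0 (esymmx_add_rank1 0) /= mulmx0 mul0mx /sc mxE addr0.
rewrite !YmxS !mulmxBl -[(X + _) *m _ *m u]mulmxA IHk (esymmx_add_rank1 k.+1) /=.
rewrite mulmxDl -[u *m w *m _]mulmxA [w *m (_ *m u)]mulmxA.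
rewrite [w *m _ *m u]mx11_scalar mul_mx_scalar raddfD mulmxDl !mul_scalar_mx.
by rewrite -mulmxA opprD addrACA /sc mxE eqxx mulr1n subrr addr0 mulmxA.
Qed.

Lemma Ypred_add_rank1 k : Ypred k (X + u *m w) *m u = Ypred k X *m u.
Proof. by case: k => [|k] /=; [rewrite !mul0mx | exact: Ymx_add_rank1]. Qed.
End RankOneUpdate.

Lemma trmx_invmx_mul_gram (R : comUnitRingType) (s : nat) (M : 'M[R]_s)
    (x : 'cV[R]_s) :
  M \in unitmx -> (invmx M *m x)^T *m (M^T *m M) = x^T *m M.
Proof.
move=> MU; rewrite trmx_mul trmx_inv mulmxA -[x^T *m _ *m _]mulmxA.
by rewrite mulVmx ?unitmx_tr // mulmx1.
Qed.

(* z := mu L v - v satisfies mu L z = - z, which positivity of L forbids unless z = 0. *)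
Lemma posdef_sqr_eigenvector (R : realFieldType) (s : nat) (L : 'M[R]_s)
    (v : 'cV[R]_s) (mu : R) :
  (forall x : 'cV[R]_s, x != 0 -> 0 < sc (x^T *m L *m x)) -> 0 < mu ->
  mu ^+ 2 *: (L *m (L *m v)) = v -> L *m v = mu^-1 *: v.
Proof.
move=> L_posdef mu_gt0 LLv; set z := mu *: (L *m v) - v.
have Lz : mu *: (L *m z) = - z.
  by rewrite /z mulmxBr -scalemxAr scalerBr scalerA -expr2 LLv opprB.
have z0 : z = 0.
  apply/eqP; apply: contraT => /L_posdef zLz_gt0.
  have zz_ge0 : 0 <= sc (z^T *m z).
    by rewrite /sc mxE sumr_ge0 // => i _; rewrite mxE -expr2 sqr_ge0.
  have : 0 < sc (z^T *m L *m z) * mu by rewrite mulr_gt0.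
  rewrite mulrC -scZ scalemxAr -mulmxA -scalemxAr Lz mulmxN scN.
  by rewrite oppr_gt0 ltNge zz_ge0.
have muLv : mu *: (L *m v) = v by apply/eqP; rewrite -subr_eq0 -/z z0.
by rewrite -{2}muLv scalerA mulVf ?scale1r // gt_eqF.
Qed.

Section InverseSqrt.
Variables (R : rcfType) (s : nat) (v : 'cV[R]_s) (L : 'M[R]_s).
Hypotheses (v_lt1 : sc (v^T *m v) < 1) (L_invsqrt : is_inv_sqrt L (1%:M - v *m v^T)).
Local Notation lambda := (Num.sqrt (1 - sc (v^T *m v)))^-1.

Lemma inv_sqrt_eigenvalue_neq0 : lambda != 0.
Proof. by rewrite invr_eq0 gt_eqF // sqrtr_gt0 subr_gt0. Qed.

Lemma inv_sqrt_unitmx : L \in unitmx.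
Proof.
have [_ [_ LLA]] := L_invsqrt.
by have [] := mulmx1_unit (etrans (mulmxA _ _ _) LLA).
Qed.

Lemma inv_sqrt_eigenvector : L *m v = lambda *: v.
Proof.
have [_ [L_posdef LLA]] := L_invsqrt.
have c_lt1 : 0 < 1 - sc (v^T *m v) by rewrite subr_gt0.
apply: posdef_sqr_eigenvector; rewrite ?sqrtr_gt0 // sqr_sqrtr ?ltW //.
have Av : (1%:M - v *m v^T) *m v = (1 - sc (v^T *m v)) *: v.
  rewrite mulmxBl mul1mx -mulmxA {1}[v^T *m v]mx11_scalar mul_mx_scalar.
  by rewrite scalerBl scale1r.
by rewrite !scalemxAr -Av !mulmxA LLA mul1mx.
Qed.

Lemma trmx_mul_inv_sqrt : v^T *m L = lambda *: v^T.
Proof.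
by have [LT _] := L_invsqrt; rewrite -{1}LT -trmx_mul inv_sqrt_eigenvector linearZ.
Qed.

Lemma invmx_inv_sqrt : invmx L = L - lambda *: (v *m v^T).
Proof.
have [_ [_ LLA]] := L_invsqrt.
rewrite -[invmx L]mulmx1 -{1}LLA !mulmxA mulVmx ?inv_sqrt_unitmx // mul1mx.
by rewrite mulmxBr mulmx1 mulmxA inv_sqrt_eigenvector scalemxAl.
Qed.

Lemma invmx_inv_sqrt_eigenvector : invmx L *m v = lambda^-1 *: v.
Proof.
apply: (canRL (scalerK inv_sqrt_eigenvalue_neq0)).
by rewrite scalemxAr -inv_sqrt_eigenvector mulKmx ?inv_sqrt_unitmx.
Qed.

Lemma inv_sqrt_conj_rank1 (e m : 'M[R]_s) :
  invmx e *m L *m m =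
  invmx e *m invmx L *m m + (invmx e *m v) *m (lambda *: (v^T *m m)).
Proof.
rewrite invmx_inv_sqrt mulmxBr mulmxBl -scalemxAr -scalemxAl -scalemxAr.
by rewrite !mulmxA subrK.
Qed.
End InverseSqrt.

Unset Implicit Arguments.
Set Strict Implicit.

Theorem mainTheorem3 (R : rcfType) (s : nat) (hs : (0 < s)%N)
  (e m : 'M[R]_s) (v : 'cV[R]_s) (Lhat : 'M[R]_s) (k : nat) :
  e \in unitmx -> m \in unitmx ->
  sc (v^T *m v) < 1 ->
  is_inv_sqrt Lhat (1%:M - v *m v^T) ->
  (e^T *m Lhat *m m)^T = e^T *m Lhat *m m ->
  let lambda := (Num.sqrt (1 - sc (v^T *m v)))^-1 in
  let gamma := e^T *m e in
  let phi := m^T *m m in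
  let n := invmx e *m v in
  let nt := invmx m *m v in
  let Dt := invmx e *m invmx Lhat *m m in
  let B := invmx e *m Lhat *m m in
  let U := lambda^-1 *: Ypred k B in
  let Ut := Dt *m Ypred k Dt in
  let W := B *m Ypred k Dt in
  let Vc := esymmx k Dt in
  let rho := - esymmx k B in
  let j := - (gamma *m W *m n) in
  [/\ rho + Vc = sc (j^T *m n),
      esymmx k B - esymmx k Dt = sc (n^T *m gamma *m W *m n),
      U *m n = Ut *m nt
    & sc (n^T *m gamma *m W *m n) = lambda ^+ 2 * sc (nt^T *m phi *m Ut *m nt)].
Proof.
move=> eU mU v_lt1 L_invsqrt _ lambda gamma phi n nt Dt B U Ut W Vc rho j.
pose w := lambda *: (v^T *m m); pose Y := Ypred k Dt.
have B_rank1 : B = Dt + n *m w := inv_sqrt_conj_rank1 v_lt1 L_invsqrt e m.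
have nTgB : n^T *m gamma *m B = w.
  rewrite trmx_invmx_mul_gram // !mulmxA mulmxK //.
  by rewrite (trmx_mul_inv_sqrt v_lt1 L_invsqrt) -scalemxAl.
have gWn : sc (n^T *m gamma *m W *m n) = sc (w *m Y *m n) by rewrite /W mulmxA nTgB.
have esymB : esymmx k B = Vc + sc (w *m Y *m n) by rewrite B_rank1 esymmx_add_rank1.
have Dt_nt : Dt *m nt = lambda^-1 *: n.
  rewrite /Dt /nt mulmxA mulmxK // -mulmxA.
  by rewrite (invmx_inv_sqrt_eigenvector v_lt1 L_invsqrt) -scalemxAr.
have Ut_nt : Ut *m nt = lambda^-1 *: (Y *m n).
  by rewrite /Ut Ypred_comm -mulmxA Dt_nt -scalemxAr.
have j_n : sc (j^T *m n) = - sc (n^T *m gamma *m W *m n).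
  by rewrite /j linearN mulNmx scN -sc_trmx trmx_mul trmxK !mulmxA.
have nt_phi_Ut_nt :
    sc (nt^T *m phi *m Ut *m nt) = lambda^-1 * sc (v^T *m m *m Y *m n).
  by rewrite -mulmxA Ut_nt trmx_invmx_mul_gram // -scalemxAr scZ !mulmxA.
split.
- by rewrite j_n gWn /rho esymB opprD addrAC addNr add0r.
- by rewrite gWn esymB addrAC subrr add0r.
- by rewrite Ut_nt /U -scalemxAl B_rank1 Ypred_add_rank1.
- rewrite gWn nt_phi_Ut_nt -!scalemxAl scZ mulrA expr2 mulfK //.
  exact: inv_sqrt_eigenvalue_neq0.
Qed.
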